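(* Let $A$ be a simple finite-dimensional associative superalgebra over an algebraically closed field $\mathbb{K}$ of characteristic zero. Then $A$ admits an even-symmetric structure if and only if $A$ is isomorphic to $M_{r,s}(\mathbb{K})$ for some integers $r\ge 1$, $s\ge 0$. In particular, the field $\mathbb{K}$ (with $\mathbb{K}_{\bar 1}=\{0\}$) is, up to isomorphism, the unique simple associative supercommutative superalgebra admitting an even-symmetric structure.
   Context: A superalgebra is a $\mathbb{Z}_2$-graded algebra $A=A_{\bar 0}\oplus A_{\bar 1}$ with $A_\alpha A_\beta\subseteq A_{\alpha+\beta}$; $|x|$ denotes the degree of a homogeneous element. An associative superalgebra is simple if its product is not identically zero and its only graded two-sided ideals are $\{0\}$ and $A$. It is supercommutative if $xy=(-1)^{|x||y|}yx$ for homogeneous $x,y$. An even-symmetric structure on $A$ is a bilinear form $B$ with $B(A_{\bar 0},A_{\bar 1})=B(A_{\bar 1},A_{\bar 0})=\{0\}$ which is supersymmetric ($B(x,y)=(-1)^{|x||y|}B(y,x)$ for homogeneous $x,y$), associative ($B(xy,z)=B(x,yz)$) and non-degenerate. For $r\ge1$, $s\ge0$, $n=r+s$, $M_{r,s}(\mathbb{K})$ is the matrix algebra $M_n(\mathbb{K})$ with even part the block-diagonal matrices $\begin{pmatrix}a&0\\0&b\end{pmatrix}$, $a\in M_r(\mathbb{K})$, $b\in M_s(\mathbb{K})$, and odd part the block-off-diagonal matrices $\begin{pmatrix}0&c\\d&0\end{pmatrix}$, $c\in M_{r\times s}(\mathbb{K})$, $d\in M_{s\times r}(\mathbb{K})$.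 *)

From HB Require Import structures.
From mathcomp Require Import all_boot all_order all_algebra.
Set Implicit Arguments. Unset Strict Implicit. Unset Printing Implicit Defensive.
Import GRing.Theory.
Local Open Scope ring_scope.

(* A (not necessarily unital) finite-dimensional superalgebra over K is
   modelled as a finite-dimensional K-vector space V (vectType), a product
   mul : V -> V -> V, and two subspaces V0 (even part), V1 (odd part). *)

Section Super.
Variables (K : fieldType) (V : vectType K).

Definition sdeg (V0 V1 : {vspace V}) (i : bool) : {vspace V} :=
  if i then V1 else V0.

Definition is_superalgebra (mul : V -> V -> V) (V0 V1 : {vspace V}) : Prop :=
  [/\ (forall a x y z, mul (a *: x + y) z = a *: mul x z + mul y z),
      (forall a x y z, mul z (a *: x + y) = a *: mul z x + mul z y),
      (V0 + V1)%VS = fullv /\ directv (V0 + V1) &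
      (forall (i j : bool) x y, x \in sdeg V0 V1 i -> y \in sdeg V0 V1 j ->
          mul x y \in sdeg V0 V1 (i (+) j))].

Definition graded_ideal (mul : V -> V -> V) (V0 V1 I : {vspace V}) : Prop :=
  I = (I :&: V0 + I :&: V1)%VS /\
  (forall a x, x \in I -> mul a x \in I /\ mul x a \in I).

Definition simple_superalgebra (mul : V -> V -> V) (V0 V1 : {vspace V}) : Prop :=
  (exists x y, mul x y != 0) /\
  (forall I, graded_ideal mul V0 V1 I -> I = 0%VS \/ I = fullv).

Definition supercommutative (mul : V -> V -> V) (V0 V1 : {vspace V}) : Prop :=
  forall (i j : bool) x y, x \in sdeg V0 V1 i -> y \in sdeg V0 V1 j ->
    mul x y = (-1) ^+ (i && j) *: mul y x.

Definition even_symmetric (mul : V -> V -> V) (V0 V1 : {vspace V})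
  (B : V -> V -> K) : Prop :=
  [/\ (forall a x y z, B (a *: x + y) z = a * B x z + B y z),
      (forall a x y z, B z (a *: x + y) = a * B z x + B z y),
      (forall x y, x \in V0 -> y \in V1 -> B x y = 0 /\ B y x = 0) /\
      (forall (i j : bool) x y, x \in sdeg V0 V1 i -> y \in sdeg V0 V1 j ->
          B x y = (-1) ^+ (i && j) * B y x),
      (forall x y z, B (mul x y) z = B x (mul y z)) &
      (forall x, (forall y, B x y = 0) -> x = 0)].

Definition has_even_symmetric (mul : V -> V -> V) (V0 V1 : {vspace V}) : Prop :=
  exists B, even_symmetric mul V0 V1 B.

End Super.

(* The superalgebra M_{r,s}(K): even part = block-diagonal, odd part =
   block-off-diagonal matrices (w.r.t. the split r + s). *)
Definition Mrs_even (K : fieldType) (r s : nat) (A : 'M[K]_(r + s)) : Prop :=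
  forall i j : 'I_(r + s), ((i < r)%N != (j < r)%N) -> A i j = 0.
Definition Mrs_odd (K : fieldType) (r s : nat) (A : 'M[K]_(r + s)) : Prop :=
  forall i j : 'I_(r + s), ((i < r)%N == (j < r)%N) -> A i j = 0.

Definition iso_Mrs (K : fieldType) (V : vectType K) (mul : V -> V -> V)
  (V0 V1 : {vspace V}) (r s : nat) : Prop :=
  exists f : V -> 'M[K]_(r + s),
    [/\ (forall a x y, f (a *: x + y) = a *: f x + f y),
        bijective f,
        (forall x y, f (mul x y) = f x *m f y),
        (forall x, x \in V0 <-> Mrs_even (f x)) &
        (forall x, x \in V1 <-> Mrs_odd (f x))].

Definition iso_field (K : fieldType) (V : vectType K) (mul : V -> V -> V)
  (V0 V1 : {vspace V}) : Prop :=
  exists f : V -> K,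
    [/\ (forall a x y, f (a *: x + y) = a * f x + f y),
        bijective f,
        (forall x y, f (mul x y) = f x * f y),
        (forall x, x \in V0) &
        (forall x, x \in V1 <-> f x = 0)].

From HB Require Import structures.
From mathcomp Require Import all_boot all_order all_algebra.
From Stdlib Require Import Classical.
Set Implicit Arguments. Unset Strict Implicit. Unset Printing Implicit Defensive.
Import GRing.Theory.
Local Open Scope ring_scope.

(* Let sigma be the grading automorphism (+1 on A_0, -1 on A_1). An even-symmetric form B
   makes A simple even as an ungraded algebra: for an ideal J, the graded ideals
   J :&: sigma J and J + sigma J are 0 or A; in the remaining case the B-orthogonal Y of
   sigma J inside J is again an ideal, Y + sigma Y = A puts J inside Y, so J is
   B-orthogonal to J + sigma J = A and vanishes.
   A minimal left ideal L is then a faithful module on which A is transitive on nonzero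
   vectors, so by Burnside's theorem left multiplication on L identifies A with End(L),
   i.e. with M_m(K) (anti-isomorphically on row vectors, whence a transpose). The map
   x |-> sigma(x) z0 intertwines L with its sigma-twist, so sigma is conjugation by a
   matrix Psi; Psi^2 is central, hence scalar, and after rescaling Psi is an involution
   whose eigenspaces split K^m as K^r + K^s: sigma becomes conjugation by
   diag(1_r, -1_s), which is the grading of M_{r,s}(K). Conversely the supertrace form
   tr(diag(1_r, -1_s) X Y) is even-symmetric on M_{r,s}(K), and since
   E_ij E_ji <> +-E_ji E_ij for i <> j, M_{r,s}(K) is supercommutative only for (1, 0). *)

Section LinearMap.
Variables (K : fieldType) (U W : lmodType K) (f : U -> W).
Hypothesis fL : linear f.

Lemma lin0 : f 0 = 0.
Proof.
have := fL 1 0 0; rewrite scaler0 addr0 scale1r => f00.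
by apply: (addIr (f 0)); rewrite add0r -f00.
Qed.

Lemma linD x y : f (x + y) = f x + f y.
Proof. by have := fL 1 x y; rewrite !scale1r. Qed.

Lemma linZ a x : f (a *: x) = a *: f x.
Proof. by have := fL a x 0; rewrite !addr0 lin0 addr0. Qed.

Lemma linN x : f (- x) = - f x.
Proof. by rewrite -scaleN1r linZ scaleN1r. Qed.

Lemma linB x y : f (x - y) = f x - f y.
Proof. by rewrite linD linN. Qed.

Lemma lin_sum (I : Type) (r : seq I) (P : pred I) (F : I -> U) :
  f (\sum_(i <- r | P i) F i) = \sum_(i <- r | P i) f (F i).
Proof.
elim: r => [|i r IH]; first by rewrite !big_nil lin0.
by rewrite !big_cons; case: (P i); rewrite ?linD IH.
Qed.

End LinearMap.

Lemma vspace_of_pred (K : fieldType) (V : vectType K) (P : V -> Prop) :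
  P 0 -> (forall a x y, P x -> P y -> P (a *: x + y)) ->
  exists S : {vspace V}, forall x, x \in S <-> P x.
Proof.
move=> P0 PL.
suff grow n (S : {vspace V}) : (\dim {:V} - \dim S < n)%N ->
    (forall x, x \in S -> P x) -> exists S : {vspace V}, forall x, x \in S <-> P x.
  apply: (grow (\dim {:V}).+1 0%VS); first by rewrite ltnS leq_subr.
  by move=> x; rewrite memv0 => /eqP ->.
elim: n S => [|n IH] S // codimS SP.
case: (classic (forall x, P x -> x \in S)) => [PS | /not_all_ex_not [x]].
  by exists S => x; split; [exact: SP | exact: PS].
move=> notPS; have [Px xS] := imply_to_and _ _ notPS.
apply: (IH (S + <[x]>)%VS).
  have ltS : (\dim S < \dim (S + <[x]>))%N.
    rewrite ltnNge; apply/negP => leS; apply: xS.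
    have /eqP -> : S == (S + <[x]>)%VS by rewrite eqEdim addvSl leS.
    by rewrite (subvP (addvSr S <[x]>)) // memv_line.
  have leV : (\dim (S + <[x]>) <= \dim {:V})%N by rewrite dimvS ?subvf.
  by rewrite ltnS in codimS; apply: leq_trans codimS; rewrite ltn_sub2l // (leq_trans ltS).
move=> y /memv_addP [u Su [v /vlineP [k ->] ->]].
by rewrite addrC; apply: PL => //; exact: SP.
Qed.

Lemma mx_nonzero_row (K : fieldType) m n (A : 'M[K]_(m, n)) :
  A != 0 -> exists i, row i A != 0.
Proof.
by rewrite -submx0 => /row_subPn [i]; rewrite submx0; exists i.
Qed.

Lemma rank_mul_shift_lt (K : closedFieldType) m (T M : 'M[K]_m) :
  T != 0 -> exists lam, (\rank (T *m (M *m T - lam%:M)) < \rank T)%N.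
Proof.
move=> Tnz; set Bw := row_base T.
have [TB BT] : (T <= Bw)%MS /\ (Bw <= T)%MS by rewrite !eq_row_base.
set C := Bw *m (M *m T) *m pinvmx Bw.
have CB : C *m Bw = Bw *m (M *m T).
  by rewrite mulmxKpV // (submx_trans _ TB) // mulmxA submxMl.
have [lam] : exists lam, root (char_poly C) lam.
  by apply/closed_rootP; rewrite size_char_poly eqSS mxrank_eq0.
rewrite -eigenvalue_root_char => /eigenvalueP [w Cw wnz].
exists lam; apply: leq_ltn_trans (mxrankS (submxMr _ TB)) _.
have -> : Bw *m (M *m T - lam%:M) = (C - lam%:M) *m Bw.
  by rewrite mulmxBr mulmxBl CB mul_mx_scalar mul_scalar_mx.
apply: leq_ltn_trans (mxrankM_maxl _ _) _.
rewrite ltn_neqAle rank_leq_row andbT; apply/negP => /eqP Cfree.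
have : w *m (C - lam%:M) == 0 by rewrite mulmxBr Cw mul_mx_scalar subrr.
by rewrite mulmx_free_eq0 ?(negbTE wnz) // /row_free Cfree.
Qed.

Section Burnside.
Variables (K : closedFieldType) (W : vectType K) (m : nat) (g : W -> 'M[K]_m).
Hypothesis gL : linear g.
Hypothesis g_mul : forall x y, exists z, g x *m g y = g z.
Hypothesis g_transitive : forall u : 'rV_m, u != 0 -> forall v, exists x, u *m g x = v.

Definition in_img X := exists x, g x = X.

Lemma img0 : in_img 0. Proof. by exists 0; rewrite (lin0 gL). Qed.
Lemma imgL a X Y : in_img X -> in_img Y -> in_img (a *: X + Y).
Proof. by move=> [x <-] [y <-]; exists (a *: x + y); rewrite gL. Qed.
Lemma imgD X Y : in_img X -> in_img Y -> in_img (X + Y).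
Proof. by move=> iX /(imgL 1 iX); rewrite scale1r. Qed.
Lemma imgM X Y : in_img X -> in_img Y -> in_img (X *m Y).
Proof. by move=> [x <-] [y <-]; have [z ->] := g_mul x y; exists z. Qed.

Lemma img_col_transitive (a : 'cV_m) : a != 0 -> forall c, exists x, g x *m a = c.
Proof.
move=> anz c; set n := \dim {:W}; set b := vbasis {:W}.
have g_coord x : g x = \sum_(i < n) coord b i x *: g b`_i.
  by rewrite {1}(coord_vbasis (memvf x)) (lin_sum gL); apply: eq_bigr => i _; rewrite (linZ gL).
pose H : 'M_(n, m) := \matrix_(i, j) (g b`_i *m a) j 0.
have Hfull : row_full H.
  apply/negPn/negP => Hnfull.
  have : kermx H^T != 0.
    rewrite -mxrank_eq0 mxrank_ker mxrank_tr subn_eq0 -ltnNge ltn_neqAle rank_leq_col.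
    by rewrite andbT.
  case/rowV0Pn => v /sub_kermxP vH vnz.
  have vgb (j : 'I_n) : v *m g b`_j *m a = 0.
    apply/matrixP => p q; rewrite !ord1 -mulmxA [RHS]mxE.
    transitivity ((v *m H^T) 0 j); last by rewrite vH mxE.
    by rewrite !mxE; apply: eq_bigr => l _; rewrite !mxE.
  have vg x : v *m g x *m a = 0.
    rewrite g_coord mulmx_sumr mulmx_suml big1 // => i _.
    by rewrite -scalemxAr -scalemxAl vgb scaler0.
  move/negP: anz; apply; apply/eqP/matrixP => i k.
  have [x vx] := g_transitive vnz (delta_mx 0 i).
  by move: (vg x) => /matrixP /(_ 0 k); rewrite vx -rowE !mxE.
pose w := c^T *m pinvmx H.
have wH : w *m H = c^T by rewrite mulmxKpV ?submx_full.
exists (\sum_(j < n) w 0 j *: b`_j).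
rewrite (lin_sum gL) mulmx_suml; apply/matrixP => i k; rewrite ord1 summxE.
have := congr1 (fun M : 'rV_m => M 0 i) wH; rewrite !mxE => <-.
by apply: eq_bigr => j _; rewrite (linZ gL) -scalemxAl !mxE.
Qed.

Lemma img_rank_decr x : (1 < \rank (g x))%N ->
  exists y, g y != 0 /\ (\rank (g y) < \rank (g x))%N.
Proof.
set T := g x => rT.
have Tnz : T != 0 by rewrite -mxrank_eq0 -lt0n ltnW.
have [i1 w1nz] := mx_nonzero_row Tnz; set w1 := row i1 T in w1nz.
have /row_subPn [i2 w2w1] : ~~ (T <= w1)%MS.
  by apply: contraL rT => /mxrankS; rewrite rank_rV w1nz ltnNge => ->.
have [s w1s] := g_transitive w1nz (delta_mx 0 i2).
have [lam rank_lt] := rank_mul_shift_lt (g s) Tnz.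
have [y gy] : in_img (T *m (g s *m T - lam%:M)).
  rewrite mulmxBr mul_mx_scalar addrC -scaleNr.
  apply: imgL; first by exists x.
  by apply: imgM; [exists x | apply: imgM; [exists s | exists x]].
exists y; rewrite gy; split => //; apply: contra w2w1 => /eqP T0.
have : row i1 (T *m (g s *m T - lam%:M)) = row i2 T - lam *: w1.
  by rewrite row_mul mulmxBr mul_mx_scalar mulmxA w1s -rowE.
by rewrite T0 row0 => /eqP; rewrite eq_sym subr_eq0 => /eqP ->; rewrite scalemx_sub.
Qed.

Lemma img_rank1 : (0 < m)%N -> exists x, \rank (g x) = 1%N.
Proof.
move=> m_gt0; pose u : 'rV[K]_m := delta_mx 0 (Ordinal m_gt0).
have unz : u != 0.
  by apply/eqP => /matrixP/(_ 0 (Ordinal m_gt0)); rewrite !mxE !eqxx; apply/eqP/oner_neq0.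
have [x ux] := g_transitive unz u.
have gxnz : g x != 0 by apply: contraNneq unz => gx0; rewrite -ux gx0 mulmx0.
suff rank1_below k y : g y != 0 -> (\rank (g y) <= k)%N -> exists x, \rank (g x) = 1%N.
  exact: (rank1_below _ x gxnz (leqnn _)).
elim: k y => [|k IH] y gynz; first by rewrite leqn0 mxrank_eq0 (negbTE gynz).
move=> rank_le; have [r1 | r_ne1] := eqVneq (\rank (g y)) 1%N; first by exists y.
have [|z [gznz rank_lt]] := img_rank_decr (x := y).
  by rewrite ltn_neqAle eq_sym r_ne1 lt0n mxrank_eq0.
by apply: (IH z gznz); rewrite -ltnS (leq_trans rank_lt).
Qed.

Theorem burnside X : in_img X.
Proof.
have [m0 | m_gt0] := posnP m.
  by exists 0; rewrite (lin0 gL); apply/matrixP => i; move: (ltn_ord i); rewrite {2}m0.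
have [x0 rank1] := img_rank1 m_gt0; set T := g x0 in rank1.
have Tnz : T != 0 by rewrite -mxrank_eq0 rank1.
have [i1 tnz] := mx_nonzero_row Tnz; set t := row i1 T in tnz.
have tT : (t <= T)%MS by rewrite row_sub.
have Tt : (T <= t)%MS by rewrite -(mxrank_leqif_sup tT).2 rank_rV tnz rank1.
set a := T *m pinvmx t; have aT : a *m t = T by rewrite mulmxKpV.
have anz : a != 0 by apply: contraNneq Tnz => a0; rewrite -aT a0 mul0mx.
have rank_one_img (c : 'cV_m) (d : 'rV_m) : in_img (c *m d).
  have [x1 x1a] := img_col_transitive anz c; have [x2 tx2] := g_transitive tnz d.
  rewrite -x1a -tx2 mulmxA -(mulmxA _ a) aT.
  by apply: imgM; [apply: imgM; [exists x1 | exists x0] | exists x2].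
have -> : X = \sum_(i < m) delta_mx i 0 *m row i X.
  apply/matrixP => i j; rewrite summxE (bigD1 i) //= big1 ?addr0 => [|k ki].
    by rewrite !mxE big_ord1 !mxE !eqxx mul1r.
  by rewrite !mxE big_ord1 !mxE eq_sym (negbTE ki) mul0r.
by apply: (big_ind in_img) => //; [exact: img0 | exact: imgD].
Qed.

End Burnside.

Section ParityMatrix.
Variables (K : fieldType) (r s : nat).

Definition parity_mx : 'M[K]_(r + s) := diag_mx (\row_i (if (i < r)%N then 1 else -1)).
Local Notation D := parity_mx.

Lemma parity_mxK : D *m D = 1%:M.
Proof.
apply/matrixP => i j; rewrite mul_diag_mx !mxE.
by case: (i < r)%N; case: (i == j); rewrite ?mul1r ?mulN1r ?opprK ?oppr0.
Qed.

Lemma tr_parity_mx : D^T = D. Proof. exact: tr_diag_mx. Qed.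

Lemma parity_conjE (M : 'M[K]_(r + s)) i j :
  (D *m M *m D) i j = (if (i < r)%N then 1 else -1) * M i j * (if (j < r)%N then 1 else -1).
Proof. by rewrite mul_mx_diag mxE mul_diag_mx !mxE. Qed.

Hypothesis two_neq0 : (2%:R : K) != 0.

Lemma oppr_fix_eq0 (x : K) : - x = x -> x = 0.
Proof.
move=> Nx; have /eqP : 2%:R * x = 0 by rewrite mulr2n mulrDl mul1r -{1}Nx addNr.
by rewrite mulf_eq0 (negbTE two_neq0) => /eqP.
Qed.

Lemma Mrs_evenE (M : 'M[K]_(r + s)) : Mrs_even M <-> D *m M *m D = M.
Proof.
split => [M_even | DMD i j].
  apply/matrixP => i j; rewrite parity_conjE.
  by case ir: (i < r)%N; case jr: (j < r)%N;
    rewrite ?mul1r ?mulr1 ?mulN1r ?mulrN1 ?opprK // M_even ?oppr0 // ir jr.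
move/matrixP: DMD => /(_ i j); rewrite parity_conjE.
by case: (i < r)%N; case: (j < r)%N => //= + _; rewrite ?mul1r ?mulr1 ?mulN1r ?mulrN1;
  exact: oppr_fix_eq0.
Qed.

Lemma Mrs_oddE (M : 'M[K]_(r + s)) : Mrs_odd M <-> D *m M *m D = - M.
Proof.
split => [M_odd | DMD i j].
  apply/matrixP => i j; rewrite parity_conjE mxE.
  by case ir: (i < r)%N; case jr: (j < r)%N;
    rewrite ?mul1r ?mulr1 ?mulN1r ?mulrN1 ?opprK // M_odd ?oppr0 // ir jr.
move/matrixP: DMD => /(_ i j); rewrite parity_conjE mxE.
by case: (i < r)%N; case: (j < r)%N => //= + _;
  rewrite ?mul1r ?mulr1 ?mulN1r ?mulrN1 ?opprK => /esym; exact: oppr_fix_eq0.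
Qed.

Lemma supertrace_swap (X Y : 'M[K]_(r + s)) e : D *m X *m D = e *: X ->
  \tr (D *m (Y *m X)) = e * \tr (D *m (X *m Y)).
Proof.
move=> DXD; rewrite [in LHS]mulmxA mxtrace_mulC [in LHS]mulmxA.
have -> : X *m D = D *m (D *m X *m D) by rewrite !mulmxA parity_mxK mul1mx.
by rewrite DXD -scalemxAr -scalemxAl mxtraceZ mulmxA.
Qed.

End ParityMatrix.

Lemma delta_mx_mulE (K : fieldType) m (Z : 'M[K]_m) i j p q :
  ((delta_mx i j : 'M_m) *m Z) p q = (p == i)%:R * Z j q.
Proof.
rewrite mxE (bigD1 j) //= big1 => [|k kj]; last by rewrite mxE (negbTE kj) andbF mul0r.
by rewrite mxE eqxx andbT addr0.
Qed.

Lemma mul_delta_mxE (K : fieldType) m (Z : 'M[K]_m) i j p q :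
  (Z *m (delta_mx i j : 'M_m)) p q = Z p i * (q == j)%:R.
Proof.
rewrite mxE (bigD1 i) //= big1 => [|k ki]; last by rewrite mxE (negbTE ki) mulr0.
by rewrite mxE eqxx addr0.
Qed.

Lemma mxtrace_mul_delta (K : fieldType) n (A : 'M[K]_n) i j :
  \tr (A *m delta_mx j i) = A i j.
Proof.
rewrite /mxtrace (bigD1 i) //= big1 => [|k ki]; first by rewrite mul_delta_mxE eqxx mulr1 addr0.
by rewrite mul_delta_mxE (negbTE ki) mulr0.
Qed.

Lemma mx_central_scalar (K : fieldType) m (Z : 'M[K]_m) :
  (forall X, X *m Z = Z *m X) -> exists c, Z = c%:M.
Proof.
case: m Z => [|m] Z Zcent; first by exists 0; apply/matrixP => [[]].
have deltaZ i j p q : (delta_mx i j *m Z) p q = (Z *m delta_mx i j) p q by rewrite Zcent.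
have Z_diag i j : Z i j = Z i i * (i == j)%:R.
  by have := deltaZ i i i j; rewrite delta_mx_mulE mul_delta_mxE eqxx mul1r eq_sym.
have Z_const i j : Z i i = Z j j.
  by have := deltaZ i j i j; rewrite delta_mx_mulE mul_delta_mxE !eqxx mul1r mulr1.
by exists (Z 0 0); apply/matrixP => p q; rewrite !mxE Z_diag (Z_const p 0) mulr_natr.
Qed.

Lemma involution_parity_diag (K : fieldType) m (P : 'M[K]_m) :
  (2%:R : K) != 0 -> P *m P = 1%:M -> (0 < \rank (kermx (P - 1%:M)))%N ->
  exists r s (Q : 'M[K]_(r + s, m)) (Q' : 'M_(m, r + s)),
    [/\ (1 <= r)%N, Q *m Q' = 1%:M, Q' *m Q = 1%:M & Q *m P = parity_mx K r s *m Q].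
Proof.
move=> two_neq0 PP fix_gt0.
set E1 := kermx (P - 1%:M); set E2 := kermx (P + 1%:M).
set R1 := row_base E1; set R2 := row_base E2.
have R1P : R1 *m P = R1.
  have : R1 *m (P - 1%:M) = 0 by apply/sub_kermxP; rewrite eq_row_base.
  by rewrite mulmxBr mulmx1 => /eqP; rewrite subr_eq0 => /eqP.
have R2P : R2 *m P = - R2.
  have : R2 *m (P + 1%:M) = 0 by apply/sub_kermxP; rewrite eq_row_base.
  by rewrite mulmxDr mulmx1 => /eqP; rewrite addr_eq0 => /eqP.
have E12_cap0 : (E1 :&: E2)%MS = 0.
  set X := (E1 :&: E2)%MS.
  have X1 : X *m (P - 1%:M) = 0 by apply/sub_kermxP; apply: capmxSl.
  have X2 : X *m (P + 1%:M) = 0 by apply/sub_kermxP; apply: capmxSr.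
  have : X *m (P + 1%:M) - X *m (P - 1%:M) = 0 by rewrite X1 X2 subrr.
  rewrite -mulmxBr opprB [1%:M - P]addrC addrACA subrr add0r mulmxDr mulmx1.
  by rewrite -mulr2n -scaler_nat => /eqP; rewrite scaler_eq0 (negbTE two_neq0) => /eqP.
have E12_full : (1%:M <= E1 + E2)%MS.
  pose h := (2%:R : K)^-1.
  have -> : (1%:M : 'M_m) = h *: (1%:M + P) + h *: (1%:M - P).
    by rewrite -scalerDr addrACA subrr addr0 -mulr2n -scaler_nat scalerA mulVf ?scale1r.
  apply: addmx_sub_adds; apply/sub_kermxP; rewrite -scalemxAl.
    by rewrite mulmxBr mulmx1 mulmxDl PP mul1mx [P + 1%:M]addrC subrr scaler0.
  by rewrite mulmxDr mulmx1 mulmxBl PP mul1mx -(opprB P) subrr scaler0.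
set Q : 'M_(\rank E1 + \rank E2, m) := col_mx R1 R2.
have QE : (Q :=: E1 + E2)%MS.
  apply: eqmx_trans (eqmx_sym (addsmxE _ _)) _.
  by apply: adds_eqmx; apply: eq_row_base.
have Qfull : row_full Q by rewrite -sub1mx QE.
have Qfree : row_free Q by rewrite /row_free QE mxrank_disjoint_sum // -QE.
exists (\rank E1), (\rank E2), Q, (pinvmx Q); split => //.
- apply/eqP; rewrite -subr_eq0 -(mulmx_free_eq0 _ Qfree) mulmxBl mul1mx.
  by rewrite mulmxKpV ?subrr.
- by rewrite -{1}(mul1mx (pinvmx Q)) mulmxKpV // sub1mx.
rewrite mul_col_mx R1P R2P mul_diag_mx; apply/matrixP => i j; rewrite !mxE.
by case: splitP => k _; rewrite /= ?mul1r ?mulN1r ?mxE.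
Qed.

Lemma iso_Mrs_even_symmetric (K : fieldType) (V : vectType K) (mul : V -> V -> V)
    (V0 V1 : {vspace V}) r s :
  (2%:R : K) != 0 -> iso_Mrs mul V0 V1 r s -> has_even_symmetric mul V0 V1.
Proof.
move=> two_neq0 [f [fL [finv fK finvK] fM fE fO]].
set D := parity_mx K r s.
pose B x y := \tr (D *m (f x *m f y)).
have even_conj x : x \in V0 -> D *m f x *m D = 1 *: f x.
  by move=> /fE /(Mrs_evenE two_neq0); rewrite scale1r.
have odd_conj x : x \in V1 -> D *m f x *m D = -1 *: f x.
  by move=> /fO /(Mrs_oddE two_neq0); rewrite scaleN1r.
have B_even_odd x y : x \in V0 -> y \in V1 -> B x y = 0.
  move=> x0 y1; apply: (oppr_fix_eq0 two_neq0); rewrite /B.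
  have := supertrace_swap (f x) (odd_conj _ y1); rewrite mulN1r => {2}->.
  by rewrite (supertrace_swap _ (even_conj _ x0)) mul1r.
have B_odd_even x y : x \in V0 -> y \in V1 -> B y x = 0.
  by move=> x0 y1; rewrite /B (supertrace_swap _ (even_conj _ x0)) mul1r; apply: B_even_odd.
exists B; split.
- by move=> a x y z; rewrite /B fL mulmxDl -scalemxAl mulmxDr -scalemxAr mxtraceD mxtraceZ.
- by move=> a x y z; rewrite /B fL mulmxDr -scalemxAr mulmxDr -scalemxAr mxtraceD mxtraceZ.
- split => [x y x0 y1 | [] [] x y /= xi yj]; first by rewrite B_even_odd // B_odd_even.
  + by rewrite expr1 mulN1r /B (supertrace_swap _ (odd_conj _ xi)) mulN1r opprK.
  + by rewrite expr0 mul1r (B_odd_even _ _ yj xi) (B_even_odd _ _ yj xi).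
  + by rewrite expr0 mul1r (B_odd_even _ _ xi yj) (B_even_odd _ _ xi yj).
  + by rewrite expr0 mul1r /B (supertrace_swap _ (even_conj _ xi)) mul1r.
- by move=> x y z; rewrite /B !fM !mulmxA.
move=> x Bx0; rewrite -(fK x) -(fK 0) (lin0 fL); congr finv.
apply/matrixP => i j; rewrite mxE.
move: (Bx0 (finv (delta_mx j i))); rewrite /B finvK mulmxA mxtrace_mul_delta.
rewrite /D mul_diag_mx mxE => /eqP; rewrite mulf_eq0 => /orP [|/eqP //].
by rewrite mxE; case: (i < r)%N; rewrite ?oppr_eq0 oner_eq0.
Qed.

Lemma scalar_square_involution (K : closedFieldType) m (Psi : 'M[K]_m) c :
  (0 < m)%N -> c != 0 -> Psi *m Psi = c%:M ->
  exists e, [/\ e ^+ 2 * c = 1, (e *: Psi) *m (e *: Psi) = 1%:M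
              & (0 < \rank (kermx (e *: Psi - 1%:M)))%N].
Proof.
move=> m_gt0 cnz PsiPsi.
have [d] : exists d, root ('X^2 - c%:P) d by apply/closed_rootP; rewrite size_XnsubC.
rewrite /root !hornerE subr_eq0 => /eqP dd.
have dnz : d != 0 by apply: contraNneq cnz => d0; rewrite -dd d0 expr0n.
have square_one e : e ^+ 2 * c = 1 -> (e *: Psi) *m (e *: Psi) = 1%:M.
  move=> ec; rewrite -scalemxAr -scalemxAl scalerA PsiPsi -expr2 -scalemx1 scalerA ec.
  by rewrite scale1r.
have dc : d^-1 ^+ 2 * c = 1 by rewrite exprVn -dd mulVf // expf_neq0.
set P := d^-1 *: Psi; have PP : P *m P = 1%:M := square_one _ dc.
have [ker0 | ker_gt0] := posnP (\rank (kermx (P - 1%:M))); last by exists d^-1.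
exists (- d^-1); rewrite sqrrN scaleNr -/P; split => //; first by rewrite mulNmx mulmxN opprK.
have : kermx (P - 1%:M) == 0 by rewrite -mxrank_eq0 ker0.
rewrite kermx_eq0 => P1_free.
have : (P + 1%:M) *m (P - 1%:M) == 0.
  by rewrite mulmxBr mulmxDl PP mulmx1 mul1mx [1%:M + P]addrC subrr.
rewrite mulmx_free_eq0 // addr_eq0 => /eqP ->.
by rewrite opprK subrr mxrank_ker mxrank0 subn0.
Qed.

Lemma vspace_eq0 (K : fieldType) (V : vectType K) (U : {vspace V}) :
  (forall x, x \in U -> x = 0) -> U = 0%VS.
Proof. by move=> U0; apply/eqP; rewrite -subv0; apply/subvP => x /U0 ->; rewrite mem0v. Qed.

Lemma vspace_eqf (K : fieldType) (V : vectType K) (U : {vspace V}) :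
  (forall x, x \in U) -> U = fullv.
Proof. by move=> Uf; apply/eqP; rewrite eqEsubv subvf; apply/subvP => x _; apply: Uf. Qed.

Section Superalgebra.
Variables (K : closedFieldType) (V : vectType K) (mul : V -> V -> V) (V0 V1 : {vspace V}).
Hypothesis mulL : forall a x y z, mul (a *: x + y) z = a *: mul x z + mul y z.
Hypothesis mulR : forall a x y z, mul z (a *: x + y) = a *: mul z x + mul z y.
Hypothesis V01_full : (V0 + V1)%VS = fullv.
Hypothesis V01_direct : directv (V0 + V1).
Hypothesis mul_graded : forall (i j : bool) x y,
  x \in sdeg V0 V1 i -> y \in sdeg V0 V1 j -> mul x y \in sdeg V0 V1 (i (+) j).
Hypothesis two_neq0 : (2%:R : K) != 0.
Hypothesis mulA : associative mul.

Let mul_linear_l z : linear (mul^~ z) := fun a x y => mulL a x y z.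
Let mul_linear_r z : linear (mul z) := fun a x y => mulR a x y z.

Lemma mul0x z : mul 0 z = 0. Proof. exact: (lin0 (mul_linear_l z)). Qed.
Lemma mulDx x y z : mul (x + y) z = mul x z + mul y z. Proof. exact: (linD (mul_linear_l z)). Qed.
Lemma mulNx x z : mul (- x) z = - mul x z. Proof. exact: (linN (mul_linear_l z)). Qed.
Lemma mulx0 z : mul z 0 = 0. Proof. exact: (lin0 (mul_linear_r z)). Qed.
Lemma mulxD x y z : mul z (x + y) = mul z x + mul z y. Proof. exact: (linD (mul_linear_r z)). Qed.
Lemma mulxN x z : mul z (- x) = - mul z x. Proof. exact: (linN (mul_linear_r z)). Qed.

Lemma V01_cap0 : (V0 :&: V1 = 0)%VS. Proof. exact/directv_addP. Qed.

Definition even_part := daddv_pi V0 V1.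
Definition odd_part := daddv_pi V1 V0.
Definition sigma x := even_part x - odd_part x.

Lemma even_part_in x : even_part x \in V0. Proof. exact: memv_pi. Qed.
Lemma odd_part_in x : odd_part x \in V1. Proof. exact: memv_pi. Qed.

Lemma even_odd_partE x : even_part x + odd_part x = x.
Proof. by apply: daddv_pi_add; rewrite ?V01_cap0 // V01_full memvf. Qed.

Lemma even_part_id v : v \in V0 -> even_part v = v.
Proof. by move=> v0; apply: daddv_pi_id; rewrite ?V01_cap0. Qed.
Lemma odd_part_id v : v \in V1 -> odd_part v = v.
Proof. by move=> v1; apply: daddv_pi_id; rewrite // capvC V01_cap0. Qed.
Lemma odd_part_even v : v \in V0 -> odd_part v = 0.
Proof. by move=> v0; apply: (addrI v); rewrite -{1}(even_part_id v0) even_odd_partE addr0. Qed.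
Lemma even_part_odd v : v \in V1 -> even_part v = 0.
Proof. by move=> v1; apply: (addIr v); rewrite -{2}(odd_part_id v1) even_odd_partE add0r. Qed.

Lemma sigmaL : linear sigma.
Proof. by move=> a x y; rewrite /sigma !linearP /= scalerN scalerBr addrACA. Qed.
Lemma sigmaD x y : sigma (x + y) = sigma x + sigma y. Proof. exact: (linD sigmaL). Qed.
Lemma sigma0 : sigma 0 = 0. Proof. exact: (lin0 sigmaL). Qed.

Lemma sigma_even v : v \in V0 -> sigma v = v.
Proof. by move=> v0; rewrite /sigma even_part_id // odd_part_even // subr0. Qed.
Lemma sigma_odd v : v \in V1 -> sigma v = - v.
Proof. by move=> v1; rewrite /sigma even_part_odd // odd_part_id // sub0r. Qed.

Lemma sigmaK x : sigma (sigma x) = x.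
Proof.
rewrite {2}/sigma (linB sigmaL) sigma_even ?even_part_in // sigma_odd ?odd_part_in //.
by rewrite opprK even_odd_partE.
Qed.

Lemma sigmaM x y : sigma (mul x y) = mul (sigma x) (sigma y).
Proof.
have m00 := @mul_graded false false; have m01 := @mul_graded false true.
have m10 := @mul_graded true false; have m11 := @mul_graded true true.
rewrite -{1}(even_odd_partE x) -{1}(even_odd_partE y) !mulDx !mulxD !sigmaD.
rewrite sigma_even ?m00 ?even_part_in // sigma_odd ?m01 ?even_part_in ?odd_part_in //.
rewrite sigma_odd ?m10 ?even_part_in ?odd_part_in // sigma_even ?m11 ?odd_part_in //.
by rewrite !mulNx !mulxN opprK.
Qed.

Lemma double_eq0 (v : V) : v + v = 0 -> v = 0.
Proof.
move=> vv0; have /eqP : (2%:R : K) *: v = 0 by rewrite scaler_nat mulr2n.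
by rewrite scaler_eq0 (negbTE two_neq0) => /eqP.
Qed.

Lemma even_sigma x : x \in V0 <-> sigma x = x.
Proof.
split => [|sx]; first exact: sigma_even.
have x1 : odd_part x = 0.
  apply: double_eq0.
  have -> : odd_part x + odd_part x = (even_part x + odd_part x) - sigma x.
    by rewrite /sigma opprB [RHS]addrC -[RHS]addrA addKr.
  by rewrite even_odd_partE sx subrr.
by rewrite -(even_odd_partE x) x1 addr0 even_part_in.
Qed.

Lemma odd_sigma x : x \in V1 <-> sigma x = - x.
Proof.
split => [|sx]; first exact: sigma_odd.
have x0 : even_part x = 0.
  apply: double_eq0.
  have -> : even_part x + even_part x = (even_part x + odd_part x) + sigma x.
    by rewrite /sigma addrACA subrr addr0.
  by rewrite even_odd_partE sx subrr.
by rewrite -(even_odd_partE x) x0 add0r odd_part_in.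
Qed.

Lemma even_part_half x : even_part x = 2%:R^-1 *: (x + sigma x).
Proof.
rewrite /sigma -{2}(even_odd_partE x) addrACA subrr addr0 -mulr2n -scaler_nat.
by rewrite scalerA mulVf // scale1r.
Qed.

Lemma odd_part_half x : odd_part x = 2%:R^-1 *: (x - sigma x).
Proof.
rewrite /sigma -{2}(even_odd_partE x) opprB [odd_part x - _]addrC addrACA subrr add0r.
by rewrite -mulr2n -scaler_nat scalerA mulVf // scale1r.
Qed.

Definition ideal (I : {vspace V}) := forall a x, x \in I -> mul a x \in I /\ mul x a \in I.

Hypothesis graded_simple : forall I, graded_ideal mul V0 V1 I -> I = 0%VS \/ I = fullv.
Hypothesis mul_neq0 : exists x y, mul x y != 0.

Lemma sigma_stable_ideal I : ideal I -> (forall x, x \in I -> sigma x \in I) ->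
  I = 0%VS \/ I = fullv.
Proof.
move=> I_ideal I_sigma; apply: graded_simple; split => //.
apply/eqP; rewrite eqEsubv subv_add !capvSl !andbT; apply/subvP => x xI.
rewrite -(even_odd_partE x); apply: memv_add; rewrite memv_cap.
  by rewrite even_part_in andbT even_part_half memvZ // memvD // I_sigma.
by rewrite odd_part_in andbT odd_part_half memvZ // memvB // I_sigma.
Qed.

Lemma rann_eq0 x : (forall a, mul a x = 0) -> x = 0.
Proof.
have [R R_def] : exists R : {vspace V}, forall x, x \in R <-> forall a, mul a x = 0.
  apply: vspace_of_pred => [a|k y z y0 z0 a]; first by rewrite mulx0.
  by rewrite mulR y0 z0 scaler0 addr0.
have [R0 /R_def | Rf _] : R = 0%VS \/ R = fullv.
- apply: sigma_stable_ideal => [a y /R_def y0 | y /R_def y0].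
    by split; apply/R_def => b; rewrite mulA y0 ?mul0x.
  by apply/R_def => b; rewrite -(sigmaK b) -sigmaM y0 sigma0.
- by rewrite R0 memv0 => /eqP.
case: mul_neq0 => y [z]; rewrite (R_def z).1 ?eqxx //.
by rewrite Rf memvf.
Qed.

Lemma ideal_cap_sigma J : ideal J ->
  J = fullv \/ forall x, x \in J -> sigma x \in J -> x = 0.
Proof.
move=> J_ideal.
have [I I_def] : exists I : {vspace V}, forall x, x \in I <-> x \in J /\ sigma x \in J.
  apply: vspace_of_pred => [|a x y [xJ sxJ] [yJ syJ]]; first by rewrite sigma0 mem0v.
  by rewrite sigmaL; split; rewrite memvD ?memvZ.
have [I0 | If] : I = 0%VS \/ I = fullv.
- apply: sigma_stable_ideal => [a x /I_def [xJ sxJ] | x /I_def [xJ sxJ]].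
    have [axJ xaJ] := J_ideal a _ xJ; have [saxJ sxaJ] := J_ideal (sigma a) _ sxJ.
    by split; apply/I_def; rewrite sigmaM.
  by apply/I_def; rewrite sigmaK.
- right => x xJ sxJ; have : x \in I by apply/I_def.
  by rewrite I0 memv0 => /eqP.
by left; apply: vspace_eqf => x; have /I_def [] : x \in I by rewrite If memvf.
Qed.

Lemma ideal_add_sigma J : ideal J ->
  J = 0%VS \/ forall v, exists y z, [/\ y \in J, sigma z \in J & v = y + z].
Proof.
move=> J_ideal.
have [I I_def] : exists I : {vspace V}, forall x, x \in I <->
    exists y z, [/\ y \in J, sigma z \in J & x = y + z].
  apply: vspace_of_pred => [|a x y [y1 [z1 [? ? ->]]] [y2 [z2 [? ? ->]]]].
    by exists 0, 0; rewrite sigma0 mem0v addr0.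
  exists (a *: y1 + y2), (a *: z1 + z2).
  split; [exact: memvD (memvZ _ _) _ | rewrite sigmaL; exact: memvD (memvZ _ _) _ |].
  by rewrite scalerDr addrACA.
have [I0 | If] : I = 0%VS \/ I = fullv.
- apply: sigma_stable_ideal => [a _ /I_def [y [z [yJ szJ ->]]] | _ /I_def [y [z [yJ szJ ->]]]].
    have [ayJ yaJ] := J_ideal a _ yJ; have [sazJ szaJ] := J_ideal (sigma a) _ szJ.
    split; apply/I_def.
      by exists (mul a y), (mul a z); split; rewrite ?sigmaM // mulxD.
    by exists (mul y a), (mul z a); split; rewrite ?sigmaM // mulDx.
  by apply/I_def; exists (sigma z), (sigma y); split; rewrite ?sigmaK ?sigmaD 1?addrC.
- left; apply: vspace_eq0 => x xJ.
  have : x \in I by apply/I_def; exists x, 0; rewrite sigma0 mem0v addr0.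
  by rewrite I0 memv0 => /eqP.
by right => v; apply/I_def; rewrite If memvf.
Qed.

Section EvenSymmetricForm.
Variable B : V -> V -> K.
Hypothesis BL : forall a x y z, B (a *: x + y) z = a * B x z + B y z.
Hypothesis BR : forall a x y z, B z (a *: x + y) = a * B z x + B z y.
Hypothesis B_even : forall x y, x \in V0 -> y \in V1 -> B x y = 0 /\ B y x = 0.
Hypothesis B_supersym : forall (i j : bool) x y,
  x \in sdeg V0 V1 i -> y \in sdeg V0 V1 j -> B x y = (-1) ^+ (i && j) * B y x.
Hypothesis B_assoc : forall x y z, B (mul x y) z = B x (mul y z).
Hypothesis B_nondeg : forall x, (forall y, B x y = 0) -> x = 0.

Let B_linear_l z : linear (fun x => B x z : K^o) := fun a x y => BL a x y z.
Let B_linear_r z : linear (fun x => B z x : K^o) := fun a x y => BR a x y z.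

Lemma B0x z : B 0 z = 0. Proof. exact: (lin0 (B_linear_l z)). Qed.
Lemma BDx x y z : B (x + y) z = B x z + B y z. Proof. exact: (linD (B_linear_l z)). Qed.
Lemma Bx0 z : B z 0 = 0. Proof. exact: (lin0 (B_linear_r z)). Qed.
Lemma BxD x y z : B z (x + y) = B z x + B z y. Proof. exact: (linD (B_linear_r z)). Qed.
Lemma BxN x z : B z (- x) = - B z x. Proof. exact: (linN (B_linear_r z)). Qed.

Lemma B_sigma u v : B u v = B v (sigma u).
Proof.
rewrite -[in LHS](even_odd_partE u) -[in LHS](even_odd_partE v).
rewrite -[in RHS](even_odd_partE v) /sigma !BDx !BxD !BxN.
have [-> ->] := B_even (even_part_in u) (odd_part_in v).
have [-> ->] := B_even (even_part_in v) (odd_part_in u).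
rewrite (@B_supersym false false _ _ (even_part_in u) (even_part_in v)).
rewrite (@B_supersym true true _ _ (odd_part_in u) (odd_part_in v)).
by rewrite expr0 expr1 mul1r mulN1r oppr0 !addr0 !add0r.
Qed.

Lemma ideal_simple J : ideal J -> J = 0%VS \/ J = fullv.
Proof.
move=> J_ideal; have [-> | J_sigma0] := ideal_cap_sigma J_ideal; first by right.
have [Y Y_def] : exists Y : {vspace V}, forall x, x \in Y <->
    x \in J /\ forall w, sigma w \in J -> B x w = 0.
  apply: vspace_of_pred => [|a x y [xJ xB] [yJ yB]].
    by split => [|w _]; rewrite ?mem0v ?B0x.
  by split => [|w wJ]; rewrite ?memvD ?memvZ // BL xB // yB // mulr0 addr0.
have mul_in_Y a x : x \in J -> mul a x \in Y.
  move=> xJ; apply/Y_def; split => [|w swJ]; first exact: (J_ideal a _ xJ).1.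
  rewrite B_assoc (J_sigma0 (mul x w)) ?Bx0 //; first exact: (J_ideal w _ xJ).2.
  by rewrite sigmaM; exact: (J_ideal (sigma x) _ swJ).1.
have Y_ideal : ideal Y.
  move=> a x /Y_def [xJ xB]; split; first exact: mul_in_Y.
  apply/Y_def; split => [|w swJ]; first exact: (J_ideal a _ xJ).2.
  by rewrite B_assoc xB // sigmaM; exact: (J_ideal (sigma a) _ swJ).1.
have [Y0 | Y_span] := ideal_add_sigma Y_ideal.
  left; apply: vspace_eq0 => x xJ; apply: rann_eq0 => a.
  by have := mul_in_Y a x xJ; rewrite Y0 memv0 => /eqP.
have J_Y x : x \in J -> x \in Y.
  move=> xJ; have [y [z [yY szY xyz]]] := Y_span x.
  have [yJ _] := (Y_def y).1 yY; have [szJ _] := (Y_def _).1 szY.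
  have zJ : z \in J by rewrite (_ : z = x - y) ?memvB // xyz addrC addKr.
  by rewrite xyz (J_sigma0 z zJ szJ) addr0.
have [J0 | J_span] := ideal_add_sigma J_ideal; first by left.
left; apply: vspace_eq0 => x xJ; apply: B_nondeg => v.
have [y [z [yJ szJ ->]]] := J_span v; rewrite BxD.
have [_ xB] := (Y_def x).1 (J_Y x xJ); have [_ yB] := (Y_def y).1 (J_Y y yJ).
by rewrite (xB z szJ) addr0 B_sigma yB // sigmaK.
Qed.

End EvenSymmetricForm.

Definition lideal (I : {vspace V}) := forall a x, x \in I -> mul a x \in I.

Lemma minimal_lideal : exists L : {vspace V},
  [/\ lideal L, L != 0%VS & forall L', lideal L' -> (L' <= L)%VS -> L' = 0%VS \/ L' = L].
Proof.
suff below k (I : {vspace V}) : lideal I -> I != 0%VS -> (\dim I <= k)%N -> exists L : {vspace V},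
    [/\ lideal L, L != 0%VS & forall L', lideal L' -> (L' <= L)%VS -> L' = 0%VS \/ L' = L].
  apply: (below _ fullv (fun a x _ => memvf _) _ (leqnn _)).
  case: mul_neq0 => x [y]; apply: contraNneq => f0.
  by rewrite -memv0 -f0 memvf.
elim: k I => [|k IH] I I_lideal Inz; first by rewrite leqn0 dimv_eq0 (negbTE Inz).
move=> dimI; case: (classic (forall L', lideal L' -> (L' <= I)%VS -> L' = 0%VS \/ L' = I)).
  by exists I.
move=> /not_all_ex_not [L' notL'].
have [L'_lideal notL'2] := imply_to_and _ _ notL'.
have [L'I notL'3] := imply_to_and _ _ notL'2.
have [L'nz L'_neqI] := not_or_and _ _ notL'3.
apply: (IH L' L'_lideal); first exact/eqP.
rewrite -ltnS (leq_trans _ dimI) // ltn_neqAle dimvS // andbT.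
by apply: contra_notN L'_neqI => /eqP dimL'; apply/eqP; rewrite eqEdim L'I dimL' leqnn.
Qed.

Section MinimalLeftIdeal.
Variable L : {vspace V}.
Hypothesis L_lideal : lideal L.
Hypothesis Lnz : L != 0%VS.
Hypothesis L_minimal : forall L', lideal L' -> (L' <= L)%VS -> L' = 0%VS \/ L' = L.
Hypothesis ideal_trivial : forall J, ideal J -> J = 0%VS \/ J = fullv.

Lemma lideal_transitive x y : x \in L -> x != 0 -> y \in L -> exists a, mul a x = y.
Proof.
move=> xL xnz yL.
have [Ax Ax_def] : exists Ax : {vspace V}, forall y, y \in Ax <-> exists a, mul a x = y.
  apply: vspace_of_pred => [|c y1 y2 [a1 <-] [a2 <-]]; first by exists 0; rewrite mul0x.
  by exists (c *: a1 + a2); rewrite mulL.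
have Ax_lideal : lideal Ax.
  by move=> b y1 /Ax_def [a <-]; apply/Ax_def; exists (mul b a); rewrite mulA.
have AxL : (Ax <= L)%VS by apply/subvP => y1 /Ax_def [a <-]; apply: L_lideal.
have [Ax0 | AxL'] := L_minimal Ax_lideal AxL; last by apply/Ax_def; rewrite AxL'.
case/eqP: xnz; apply: rann_eq0 => a.
have : mul a x \in Ax by apply/Ax_def; exists a.
by rewrite Ax0 memv0 => /eqP.
Qed.

Lemma lideal_faithful a : (forall x, x \in L -> mul a x = 0) -> a = 0.
Proof.
have [Ann Ann_def] : exists Ann : {vspace V}, forall a, a \in Ann <->
    forall x, x \in L -> mul a x = 0.
  apply: vspace_of_pred => [x _ | c a1 a2 a1L a2L x xL]; first by rewrite mul0x.
  by rewrite mulL a1L // a2L // scaler0 addr0.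
have Ann_ideal : ideal Ann.
  move=> b a' /Ann_def a'L; split; apply/Ann_def => x xL; rewrite -mulA.
    by rewrite a'L // mulx0.
  by rewrite a'L // L_lideal.
have [Ann0 aL | Annf] := ideal_trivial Ann_ideal.
  have : a \in Ann by apply/Ann_def.
  by rewrite Ann0 memv0 => /eqP.
move=> _; exfalso; move/negP: Lnz; apply; rewrite -vpick0; apply/eqP; apply: rann_eq0 => b.
have /Ann_def -> // : b \in Ann by rewrite Annf memvf.
exact: memv_pick.
Qed.

Local Notation m := (\dim L).
Local Notation bL := (vbasis L).

Definition lcoord (x : V) : 'rV[K]_m := \row_i coord bL i x.
Definition lvec (u : 'rV[K]_m) : V := \sum_i u 0 i *: bL`_i.
Definition lmat (h : V -> V) : 'M[K]_m := \matrix_(j, i) coord bL i (h bL`_j).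
Definition act (a : V) : 'M[K]_m := lmat (mul a).

Lemma lcoordL : linear lcoord.
Proof. by move=> c x y; apply/rowP => i; rewrite !mxE linearP. Qed.

Lemma lvec_in u : lvec u \in L.
Proof. by apply: memv_suml => i _; rewrite memvZ // vbasis_mem // mem_nth ?size_tuple. Qed.

Lemma lvecK u : lcoord (lvec u) = u.
Proof.
have bfree := basis_free (vbasisP L).
apply/rowP => i; rewrite mxE linear_sum (bigD1 i) //= big1 => [|j ji].
  by rewrite linearZ /= coord_free // eqxx mulr1 addr0.
by rewrite linearZ /= coord_free // (negbTE ji) mulr0.
Qed.

Lemma lcoordK x : x \in L -> lvec (lcoord x) = x.
Proof. by move=> xL; rewrite [RHS](coord_vbasis xL); apply: eq_bigr => i _; rewrite mxE. Qed.

Lemma lvec0 : lvec 0 = 0.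
Proof. by rewrite /lvec big1 // => i _; rewrite mxE scale0r. Qed.

Lemma lcoord_lmat (h : V -> V) : linear h -> forall x, x \in L -> lcoord (h x) = lcoord x *m lmat h.
Proof.
move=> hL x xL; rewrite -{1}(lcoordK xL) /lvec (lin_sum hL).
apply/rowP => i; rewrite !mxE linear_sum; apply: eq_bigr => j _.
by rewrite (linZ hL) linearZ /= !mxE.
Qed.

Lemma lcoord_mul a x : x \in L -> lcoord (mul a x) = lcoord x *m act a.
Proof. exact: (lcoord_lmat (fun c y z => mulR c y z a)). Qed.

Lemma actL : linear act.
Proof. by move=> c a a'; apply/matrixP => j i; rewrite !mxE mulL linearP. Qed.

Lemma act_row a u : u *m act a = lcoord (mul a (lvec u)).
Proof. by rewrite lcoord_mul ?lvec_in // lvecK. Qed.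

Lemma actM a b : act (mul a b) = act b *m act a.
Proof.
apply/eqP/mulmxP => u; rewrite mulmxA !act_row -mulA lcoord_mul ?L_lideal ?lvec_in //.
by rewrite act_row.
Qed.

Lemma act_transitive (u : 'rV_m) : u != 0 -> forall v, exists a, u *m act a = v.
Proof.
move=> unz v; have vnz : lvec u != 0.
  by apply: contraNneq unz => u0; rewrite -(lvecK u) u0 (lin0 lcoordL).
have [a ua] := lideal_transitive (lvec_in u) vnz (lvec_in v).
by exists a; rewrite act_row ua lvecK.
Qed.

Lemma act_onto X : exists a, act a = X.
Proof.
have act_mul x y : exists z, act x *m act y = act z by exists (mul y x); rewrite actM.
exact: burnside actL act_mul act_transitive X.
Qed.

Lemma act_inj a b : act a = act b -> a = b.
Proof.
move=> ab; apply/eqP; rewrite -subr_eq0; apply/eqP; apply: lideal_faithful => x xL.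
have abxL : mul (a - b) x \in L by apply: L_lideal.
by rewrite -(lcoordK abxL) lcoord_mul // (linB actL) ab subrr mulmx0 lvec0.
Qed.

Lemma act_sigma_intertwiner : exists Psi : 'M[K]_m,
  (forall u : 'rV_m, u *m Psi = 0 -> u = 0) /\ forall a, act a *m Psi = Psi *m act (sigma a).
Proof.
have x0L : vpick L \in L := memv_pick L; set x0 := vpick L in x0L.
have x0nz : x0 != 0 by rewrite vpick0.
have [z0 z0L x0z0] : exists2 z0, z0 \in L & mul (sigma x0) z0 != 0.
  apply: NNPP => no_z0; case/eqP: x0nz.
  rewrite -(sigmaK x0) (@lideal_faithful (sigma x0)) ?sigma0 // => z zL.
  have [|zz] := eqVneq (mul (sigma x0) z) 0 => //.
  by case: no_z0; exists z.
pose psi x := mul (sigma x) z0.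
have psiL : linear psi by move=> c x y; rewrite /psi sigmaL mulL.
have psi_mul a x : psi (mul a x) = mul (sigma a) (psi x) by rewrite /psi sigmaM mulA.
have psi_in x : psi x \in L by apply: L_lideal.
have intertwine a : act a *m lmat psi = lmat psi *m act (sigma a).
  apply/eqP/mulmxP => u; rewrite mulmxA act_row -lcoord_lmat ?L_lideal ?lvec_in //.
  by rewrite psi_mul lcoord_mul // lcoord_lmat ?lvec_in // lvecK mulmxA.
exists (lmat psi); split => // u uPsi; apply: contraTeq x0z0 => unz; rewrite negbK.
have Psi0 (v : 'rV_m) : v *m lmat psi = 0.
  by have [a <-] := act_transitive unz v; rewrite -mulmxA intertwine mulmxA uPsi mul0mx.
by rewrite -/(psi x0) -(lcoordK (psi_in x0)) lcoord_lmat // Psi0 lvec0.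
Qed.

Lemma act_sigma_conj : exists P : 'M[K]_m, [/\ P *m P = 1%:M,
  (0 < \rank (kermx (P - 1%:M)))%N & forall a, act (sigma a) = P *m act a *m P].
Proof.
have [Psi [Psi_inj intertwine]] := act_sigma_intertwiner.
have m_gt0 : (0 < m)%N by rewrite lt0n dimv_eq0.
have [c PsiPsi] : exists c, Psi *m Psi = c%:M.
  apply: mx_central_scalar => X; have [a <-] := act_onto X.
  by rewrite mulmxA intertwine -mulmxA intertwine sigmaK mulmxA.
have cnz : c != 0.
  apply/eqP => c0; have one0 : (1%:M : 'M[K]_m) = 0.
    apply/row_matrixP => i; rewrite row0; apply: (Psi_inj); apply: (Psi_inj).
    by rewrite -mulmxA PsiPsi c0 mul_mx_scalar scale0r.
  by move: m_gt0; rewrite -(mxrank1 K m) one0 mxrank0.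
have [e [ec PP fix_gt0]] := scalar_square_involution m_gt0 cnz PsiPsi.
exists (e *: Psi); split => // a.
rewrite -scalemxAr -!scalemxAl -mulmxA intertwine mulmxA PsiPsi mul_scalar_mx.
by rewrite !scalerA -expr2 ec scale1r.
Qed.

Lemma lideal_iso_Mrs : exists r s, (1 <= r)%N /\ iso_Mrs mul V0 V1 r s.
Proof.
have [P [PP fix_gt0 act_sigma]] := act_sigma_conj.
have [r [s [Q [Q' [r_gt0 QQ' Q'Q QP]]]]] := involution_parity_diag two_neq0 PP fix_gt0.
set D := parity_mx K r s; exists r, s; split => //.
pose f x := (Q *m act x *m Q')^T.
have PQ' : P *m Q' = Q' *m D.
  have : Q' *m (Q *m P) *m Q' = Q' *m (D *m Q) *m Q' by rewrite QP.
  by rewrite mulmxA Q'Q mul1mx => ->; rewrite mulmxA -(mulmxA _ Q) QQ' mulmx1.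
have f_sigma x : f (sigma x) = D *m f x *m D.
  rewrite /f act_sigma -!mulmxA PQ' !mulmxA QP.
  by rewrite !trmx_mul tr_parity_mx !mulmxA.
have fK x : Q' *m (f x)^T *m Q = act x.
  by rewrite trmxK !mulmxA Q'Q mul1mx -mulmxA Q'Q mulmx1.
have f_inj : injective f by move=> x y fxy; apply: act_inj; rewrite -fK fxy fK.
have fL : linear f.
  move=> a x y; rewrite /f actL mulmxDr mulmxDl -scalemxAr -scalemxAl.
  by rewrite linearD linearZ.
have act_pre X : exists a, act a == X by have [a <-] := act_onto X; exists a.
exists f; split => //.
- exists (fun M => xchoose (act_pre (Q' *m M^T *m Q))) => [x | M].
    by apply: act_inj; rewrite (eqP (xchooseP (act_pre _))) fK.
  rewrite /f (eqP (xchooseP (act_pre _))).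
  by rewrite !mulmxA QQ' mul1mx -!mulmxA QQ' mulmx1 trmxK.
- move=> x y; rewrite /f actM -trmx_mul; congr (_^T).
  by rewrite !mulmxA -(mulmxA (Q *m act y) Q' Q) Q'Q mulmx1.
- move=> x; rewrite even_sigma (Mrs_evenE two_neq0) -f_sigma.
  by split => [-> // | /f_inj].
move=> x; rewrite odd_sigma (Mrs_oddE two_neq0) -f_sigma -(linN fL).
by split => [-> // | /f_inj].
Qed.

End MinimalLeftIdeal.

Lemma even_symmetric_iso_Mrs :
  has_even_symmetric mul V0 V1 -> exists r s, (1 <= r)%N /\ iso_Mrs mul V0 V1 r s.
Proof.
case=> B [BL BR [B_even B_supersym] B_assoc B_nondeg].
have [L [L_lideal Lnz L_minimal]] := minimal_lideal.
have A_simple := ideal_simple BL BR B_even B_supersym B_assoc B_nondeg.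
exact: lideal_iso_Mrs L_lideal Lnz L_minimal A_simple.
Qed.

End Superalgebra.

Lemma delta_mx_even (K : fieldType) r s (i j : 'I_(r + s)) :
  (i < r)%N = (j < r)%N -> Mrs_even (delta_mx i j : 'M[K]_(r + s)).
Proof.
move=> ij p q; rewrite mxE.
by case: (p =P i) => [->|] //; case: (q =P j) => [->|] //; rewrite ij eqxx.
Qed.

Lemma delta_mx_odd (K : fieldType) r s (i j : 'I_(r + s)) :
  (i < r)%N != (j < r)%N -> Mrs_odd (delta_mx i j : 'M[K]_(r + s)).
Proof.
move=> ij p q; rewrite mxE.
by case: (p =P i) => [->|] //; case: (q =P j) => [->|] //; rewrite (negbTE ij).
Qed.

Lemma iso_field_even_symmetric (K : fieldType) (V : vectType K) (mul : V -> V -> V)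
    (V0 V1 : {vspace V}) :
  iso_field mul V0 V1 -> has_even_symmetric mul V0 V1.
Proof.
move=> [f [fL [finv fK finvK] fM fE fO]].
have f0 : f 0 = 0 := lin0 (f := f : V -> K^o) fL.
exists (fun x y => f x * f y); split.
- by move=> a x y z; rewrite fL mulrDl mulrA.
- by move=> a x y z; rewrite fL mulrDr mulrCA.
- split => [x y _ /fO -> | [] [] x y /= xi yj]; first by rewrite mulr0 mul0r.
  + by move/fO: xi => ->; move/fO: yj => ->; rewrite !mulr0.
  + by rewrite expr0 mul1r mulrC.
  + by rewrite expr0 mul1r mulrC.
  + by rewrite expr0 mul1r mulrC.
- by move=> x y z; rewrite !fM mulrA.
by move=> x /(_ (finv 1)); rewrite finvK mulr1 => fx0; rewrite -(fK x) fx0 -f0 fK.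
Qed.

Lemma iso_Mrs_supercommutative_dims (K : fieldType) (V : vectType K) (mul : V -> V -> V)
    (V0 V1 : {vspace V}) r s :
  (1 <= r)%N -> iso_Mrs mul V0 V1 r s -> supercommutative mul V0 V1 -> r = 1%N /\ s = 0%N.
Proof.
move=> r_gt0 [f [fL [finv fK finvK] fM fE fO]] scomm.
have delta_noncomm (b : bool) (i j : 'I_(r + s)) : i != j ->
    finv (delta_mx i j) \in sdeg V0 V1 b -> finv (delta_mx j i) \in sdeg V0 V1 b -> False.
  move=> ij xij xji; move: (scomm _ _ _ _ xij xji) => /(congr1 f).
  rewrite (linZ fL) !fM !finvK !mul_delta_mx => /matrixP /(_ i i).
  by rewrite !mxE !eqxx (negbTE ij) /= mulr0 => /eqP; rewrite oner_eq0.
have i0_lt : (0 < r + s)%N by rewrite (leq_trans r_gt0) ?leq_addr.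
pose i0 := Ordinal i0_lt.
split; apply/eqP.
  rewrite eqn_leq r_gt0 andbT leqNgt; apply/negP => r_gt1.
  have i1_lt : (1 < r + s)%N by rewrite (leq_trans r_gt1) ?leq_addr.
  pose i1 := Ordinal i1_lt.
  apply: (delta_noncomm false i0 i1) => //; apply/fE; rewrite finvK;
    by apply: delta_mx_even; rewrite /= r_gt0 r_gt1.
rewrite -leqn0 leqNgt; apply/negP => s_gt0.
have j0_lt : (r < r + s)%N by rewrite -{1}(addn0 r) ltn_add2l.
pose j0 := Ordinal j0_lt.
have i0j0 : i0 != j0 by rewrite -val_eqE /= neq_ltn r_gt0.
apply: (delta_noncomm true i0 j0) => //; apply/fO; rewrite finvK;
  by apply: delta_mx_odd; rewrite /= r_gt0 ltnn.
Qed.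

Lemma iso_M10_field (K : fieldType) (V : vectType K) (mul : V -> V -> V) (V0 V1 : {vspace V}) :
  iso_Mrs mul V0 V1 1 0 -> iso_field mul V0 V1.
Proof.
move=> [f [fL [finv fK finvK] fM fE fO]].
have scalar_mx_entry (M : 'M[K]_(1 + 0)) : M = (M ord0 ord0)%:M.
  by apply/matrixP => i j; rewrite !mxE !ord1 eqxx.
exists (fun x => f x ord0 ord0); split.
- by move=> a x y; rewrite fL !mxE.
- exists (fun k => finv k%:M) => [x | k]; first by rewrite -scalar_mx_entry fK.
  by rewrite finvK mxE eqxx.
- by move=> x y; rewrite fM mxE big_ord1.
- by move=> x; apply/fE => i j; rewrite !ord1 eqxx.
move=> x; rewrite fO; split => [/(_ ord0 ord0) -> // | fx0 i j _].
by rewrite !ord1.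
Qed.

Theorem mainTheorem4 (K : closedFieldType) (charK0 : [pchar K] =i pred0)
  (V : vectType K) (mul : V -> V -> V) (V0 V1 : {vspace V}) :
  is_superalgebra mul V0 V1 -> associative mul -> simple_superalgebra mul V0 V1 ->
  (has_even_symmetric mul V0 V1 <->
     exists r s : nat, (1 <= r)%N /\ iso_Mrs mul V0 V1 r s)
  /\ (supercommutative mul V0 V1 ->
      (has_even_symmetric mul V0 V1 <-> iso_field mul V0 V1)).
Proof.
move=> [mulL mulR [V01_full V01_direct] mul_graded] mulA [mul_neq0 graded_simple].
have two_neq0 : (2%:R : K) != 0 by move/pcharf0P: charK0 => ->.
have even_symmetricE : has_even_symmetric mul V0 V1 <->
    exists r s, (1 <= r)%N /\ iso_Mrs mul V0 V1 r s.
  split; first exact: even_symmetric_iso_Mrs.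
  by case=> r [s [_ iso]]; exact: iso_Mrs_even_symmetric two_neq0 iso.
split => // scomm; split; last exact: iso_field_even_symmetric.
case/even_symmetricE => r [s [r_gt0 iso]].
by have [r1 s0] := iso_Mrs_supercommutative_dims r_gt0 iso scomm; subst r s; exact: iso_M10_field.
Qed.
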